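(* Let $a\ge 1$ and let $v$ be a valuation on a finite set $X$. The following are equivalent: (0) $v$ is $a$-submodular; (1) for every $x\in X$ and $S\subseteq T\subseteq X$ with $x\notin T$, $a\,v(x\mid S)\ge v(x\mid T)$; (2) for every $S,T,V\subseteq X$ with $S\subseteq T$, $a\,v(V\mid S)\ge v(V\mid T)$; (3) for every $A,B\subseteq X$, $v(A)+a\,v(B)\ge v(A\cup B)+a\,v(A\cap B)$.
   Context: A valuation on a finite set $X$ is a function $v:2^X\to\mathbb{R}_{\ge 0}$ with $v(\emptyset)=0$ and monotone under inclusion. The marginal valuation is $v(A\mid W)=v(A\cup W)-v(W)$; $v(x\mid S)$ means $v(\{x\}\mid S)$. A valuation $w$ exhibits $a$-bounded complementarities if $w(A\cup\{x\})\le w(A)+a\,w(\{x\})$ for every set $A$ and item $x$. A valuation $v$ is $a$-submodular if for every $W\subseteq X$ the marginal valuation $v(\cdot\mid W)$ exhibits $a$-bounded complementarities. *)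

From mathcomp Require Import all_boot all_order all_algebra.
Set Implicit Arguments. Unset Strict Implicit. Unset Printing Implicit Defensive.
Import Order.TTheory GRing.Theory Num.Theory.
Local Open Scope ring_scope.

Definition valuation (R : realFieldType) (X : finType) (v : {set X} -> R) : Prop :=
  [/\ v set0 = 0,
      (forall A : {set X}, 0 <= v A) &
      (forall A B : {set X}, A \subset B -> v A <= v B)].

Definition marg (R : realFieldType) (X : finType) (v : {set X} -> R)
  (A W : {set X}) : R := v (A :|: W) - v W.

Definition bounded_compl (R : realFieldType) (X : finType) (a : R)
  (w : {set X} -> R) : Prop :=
  forall (A : {set X}) (x : X), w (x |: A) <= w A + a * w [set x].

Definition a_submodular (R : realFieldType) (X : finType) (a : R)
  (v : {set X} -> R) : Prop :=
  forall W : {set X}, bounded_compl a (fun A => marg v A W).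

(* Condition (0)
   at W = S applied to A = T gives (1) at once.  For (1) -> (2), adding the
   elements of V one at a time telescopes v(V | T) into singleton marginals
   v(x | V' u T), each of which is bounded by a v(x | V' u S) (trivially when
   x is in V' u T, where it vanishes).  Condition (3)
   is (2) at S = A n B, T = A, V = B, and (3) at A u W, {x} u W returns (0)
   because their intersection contains W. *)

From mathcomp Require Import all_boot all_order all_algebra.
From mathcomp Require Import lra.
Set Implicit Arguments. Unset Strict Implicit. Unset Printing Implicit Defensive.
Import Order.TTheory GRing.Theory Num.Theory.
Local Open Scope ring_scope.

Section Marginals.

Variables (R : realFieldType) (X : finType) (v : {set X} -> R) (a : R).

Lemma marg0 (T : {set X}) : marg v set0 T = 0.
Proof. by rewrite /marg set0U subrr. Qed.

Lemma margU1 (x : X) (V T : {set X}) :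
  marg v (x |: V) T = marg v [set x] (V :|: T) + marg v V T.
Proof. by rewrite /marg setUA; lra. Qed.

Lemma marg1_le_of_a_submodular (x : X) (S T : {set X}) :
  a_submodular a v -> S \subset T -> marg v [set x] T <= a * marg v [set x] S.
Proof.
move=> subv ST; have := subv S T x; rewrite /marg -setUA !(setUidPl ST); lra.
Qed.

Lemma le_setUI_of_marg_le :
  (forall S T V : {set X}, S \subset T -> marg v V T <= a * marg v V S) ->
  forall A B : {set X}, v (A :|: B) + a * v (A :&: B) <= v A + a * v B.
Proof.
move=> margS A B; have := margS _ _ B (subsetIl A B).
by rewrite /marg setUC (setUidPl (subsetIr A B)) mulrBr; lra.
Qed.

Lemma marg_le_of_marg1_le :
  (forall (x : X) (S T : {set X}), S \subset T ->
     marg v [set x] T <= a * marg v [set x] S) ->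
  forall S T V : {set X}, S \subset T -> marg v V T <= a * marg v V S.
Proof.
move=> marg1S S T V ST; rewrite -(set_enum V).
elim: (enum V) => [|x s IH]; first by rewrite set_nil !marg0 mulr0.
rewrite set_cons !margU1 mulrDr.
exact/lerD/IH/marg1S/setUS.
Qed.

Hypotheses (v_mono : {homo v : A B / A \subset B >-> A <= B}) (a_ge0 : 0 <= a).

Lemma marg_ge0 (A W : {set X}) : 0 <= marg v A W.
Proof. by rewrite subr_ge0 v_mono ?subsetUr. Qed.

Lemma marg1_le_of_marg1_notin_le :
  (forall (x : X) (S T : {set X}), S \subset T -> x \notin T ->
     marg v [set x] T <= a * marg v [set x] S) ->
  forall (x : X) (S T : {set X}), S \subset T ->
    marg v [set x] T <= a * marg v [set x] S.
Proof.
move=> marg1S x S T ST; have [xT|] := boolP (x \in T); last exact: marg1S.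
have -> : marg v [set x] T = 0 by rewrite /marg (setUidPr _) ?sub1set ?subrr.
exact/mulr_ge0/marg_ge0.
Qed.

Lemma a_submodular_of_le_setUI :
  (forall A B : {set X}, v (A :|: B) + a * v (A :&: B) <= v A + a * v B) ->
  a_submodular a v.
Proof.
move=> UIle W A x; have := UIle (A :|: W) ([set x] :|: W).
have -> : A :|: W :|: ([set x] :|: W) = x |: A :|: W.
  by rewrite setUACA setUid [A :|: _]setUC.
have : a * v W <= a * v ((A :|: W) :&: ([set x] :|: W)).
  by rewrite ler_wpM2l //; apply: v_mono; rewrite subsetI !subsetUr.
rewrite /marg; lra.
Qed.

End Marginals.

Theorem proposition5 (R : realFieldType) (X : finType) (a : R)
  (v : {set X} -> R) (ha : 1 <= a) (hv : valuation v) :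
  [<-> a_submodular a v;
       (forall (x : X) (S T : {set X}), S \subset T -> x \notin T ->
          marg v [set x] T <= a * marg v [set x] S);
       (forall S T V : {set X}, S \subset T ->
          marg v V T <= a * marg v V S);
       (forall A B : {set X},
          v (A :|: B) + a * v (A :&: B) <= v A + a * v B)].
Proof.
have a_ge0 : 0 <= a := le_trans ler01 ha.
case: hv => _ _ v_mono.
tfae.
- by move=> subv x S T ST _; exact: marg1_le_of_a_submodular.
- by move/(marg1_le_of_marg1_notin_le v_mono a_ge0)/marg_le_of_marg1_le; apply.
- exact: le_setUI_of_marg_le.
- exact: a_submodular_of_le_setUI.
Qed.
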